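(* Let $S$ be a semigroup, let $T$ be a subsemigroup of $S$ generated by a finite set $A$, and let $s\in S$. Suppose that $|\langle T,s\rangle\setminus T|=n$ is finite. Then there exists $N\in\mathbb{N}$ such that for all $b_1,\ldots,b_n\in A\cup\{s\}$, if the elements $s, sb_1, sb_1b_2,\ldots, sb_1\cdots b_n$ are pairwise distinct, then there exist $0\le i\le n$, $1\le j\le N$ and $a_1,\ldots,a_j\in A$ such that $sb_1\cdots b_i=a_1\cdots a_j$ (where for $i=0$ the left-hand side is $s$).
   Context: $\langle T,s\rangle$ denotes the subsemigroup of $S$ generated by $T\cup\{s\}$. *)

From Stdlib Require Import List Arith.
Import ListNotations.

Inductive gen {G : Type} (op : G -> G -> G) (X : G -> Prop) : G -> Prop :=
| gen_base : forall x, X x -> gen op X x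
| gen_op : forall x y, gen op X x -> gen op X y -> gen op X (op x y).

Definition gen_with {G : Type} (op : G -> G -> G) (T : G -> Prop) (s : G) : G -> Prop :=
  gen op (fun x => T x \/ x = s).

Definition has_card {G : Type} (P : G -> Prop) (n : nat) : Prop :=
  exists l : list G, NoDup l /\ length l = n /\ (forall x, In x l <-> P x).

Fixpoint prefix {G : Type} (op : G -> G -> G) (s : G) (b : nat -> G) (k : nat) : G :=
  match k with
  | 0 => s
  | S k' => op (prefix op s b k') (b (S k'))
  end.

(* prodn op a j = a 1 * a 2 * ... * a j   for j >= 1  (prodn op a 0 := a 0, unused). *)
Fixpoint prodn {G : Type} (op : G -> G -> G) (a : nat -> G) (j : nat) : G :=
  match j with
  | 0 => a 0
  | 1 => a 1
  | S j' => op (prodn op a j') (a j)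
  end.

(* The n+1 distinct prefixes s, s b1, ..., s b1...bn all lie in <T,s>, which
   has only n elements outside T, so by pigeonhole one of them lies in T and is
   therefore a product a1...aj of generators.  Such a prefix is a product of at
   most n letters from A ∪ {s} starting with s, and there are only finitely many
   of those; a uniform bound N is the largest of the word lengths chosen for
   the finitely many candidates that lie in T. *)
From Stdlib Require Import List Arith Lia Classical.
Import ListNotations.

Lemma has_card_pigeonhole (G : Type) (P : G -> Prop) (n : nat) (f : nat -> G) :
  has_card P n ->
  (forall i j, i <= n -> j <= n -> i <> j -> f i <> f j) ->
  exists i, i <= n /\ ~ P (f i).
Proof.
  intros [l [Hl [Hlen HinP]]] Hinj.
  apply NNPP; intros Hall.
  assert (Hnodup : NoDup (map f (seq 0 (S n)))).
  { apply NoDup_map_NoDup_ForallPairs; [|apply seq_NoDup].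
    intros i j Hi Hj Efij; apply in_seq in Hi, Hj.
    destruct (Nat.eq_dec i j) as [|Hij]; [assumption|].
    exfalso; exact (Hinj i j ltac:(lia) ltac:(lia) Hij Efij). }
  assert (Hincl : incl (map f (seq 0 (S n))) l).
  { intros x Hx; apply in_map_iff in Hx as [i [<- Hi]]; apply in_seq in Hi.
    apply HinP, NNPP; intros HnP; apply Hall; exists i; split; [lia|exact HnP]. }
  pose proof (NoDup_incl_length Hnodup Hincl) as Hle.
  rewrite length_map, length_seq in Hle; lia.
Qed.

Section Products.
Variables (G : Type) (op : G -> G -> G).
Hypothesis op_assoc : forall x y z, op x (op y z) = op (op x y) z.

Definition is_product (A : list G) (j : nat) (x : G) : Prop :=
  exists a : nat -> G, (forall k, 1 <= k <= j -> In (a k) A) /\ x = prodn op a j.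

Lemma prodn_S (a : nat -> G) (j : nat) :
  1 <= j -> prodn op a (S j) = op (prodn op a j) (a (S j)).
Proof. destruct j; [lia|reflexivity]. Qed.

Lemma prodn_ext (a a' : nat -> G) (j : nat) :
  1 <= j -> (forall k, 1 <= k <= j -> a k = a' k) -> prodn op a j = prodn op a' j.
Proof.
  revert a a'; induction j as [|j IH]; intros a a' Hj Heq; [lia|].
  destruct (Nat.eq_dec j 0) as [->|Hj0]; [apply Heq; lia|].
  rewrite !prodn_S by lia; rewrite (IH a a'), Heq by (intros; try apply Heq; lia).
  reflexivity.
Qed.

Lemma prodn_concat (a a' : nat -> G) (j m : nat) :
  1 <= j -> 1 <= m ->
  prodn op (fun k => if k <=? j then a k else a' (k - j)) (j + m)
  = op (prodn op a j) (prodn op a' m).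
Proof.
  intros Hj Hm; induction m as [|m IH]; [lia|].
  rewrite Nat.add_succ_r, prodn_S by lia.
  destruct (Nat.leb_spec (S (j + m)) j) as [|_]; [lia|].
  replace (S (j + m) - j) with (S m) by lia.
  destruct (Nat.eq_dec m 0) as [->|Hm0].
  - rewrite Nat.add_0_r, (prodn_ext _ a j Hj); [reflexivity|].
    intros k Hk; destruct (Nat.leb_spec k j); [reflexivity|lia].
  - rewrite IH, prodn_S by lia; symmetry; apply op_assoc.
Qed.

Lemma gen_is_product (A : list G) (x : G) :
  gen op (fun a => In a A) x -> exists j, 1 <= j /\ is_product A j x.
Proof.
  induction 1 as [x Hx|x y _ [j [Hj [a [Ha ->]]]] _ [m [Hm [a' [Ha' ->]]]]].
  - exists 1; split; [lia|]; exists (fun _ => x); split; [auto|reflexivity].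
  - exists (j + m); split; [lia|].
    exists (fun k => if k <=? j then a k else a' (k - j)); split.
    + intros k Hk; destruct (Nat.leb_spec k j); [apply Ha|apply Ha']; lia.
    + symmetry; apply prodn_concat; assumption.
Qed.

Lemma gen_is_product_bounded (A L : list G) :
  exists N, forall x, In x L -> gen op (fun a => In a A) x ->
    exists j, 1 <= j <= N /\ is_product A j x.
Proof.
  induction L as [|y L [N HN]]; [exists 0; intros x []|].
  destruct (classic (gen op (fun a => In a A) y)) as [Hy|Hy].
  - destruct (gen_is_product A y Hy) as [jy [Hjy Hrep]].
    exists (Nat.max N jy); intros x [<-|Hx] Hg.
    + exists jy; split; [lia|exact Hrep].
    + destruct (HN x Hx Hg) as [j [Hj Hrep']]; exists j; split; [lia|exact Hrep'].
  - exists N; intros x [<-|Hx] Hg; [contradiction|auto].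
Qed.

Fixpoint extensions (A : list G) (s : G) (k : nat) : list G :=
  match k with
  | 0 => [s]
  | S k => flat_map (fun x => map (op x) (A ++ [s])) (extensions A s k)
  end.

Lemma prefix_in_extensions (A : list G) (s : G) (b : nat -> G) (k : nat) :
  (forall i, 1 <= i <= k -> In (b i) A \/ b i = s) ->
  In (prefix op s b k) (extensions A s k).
Proof.
  induction k as [|k IH]; intros Hb; [left; reflexivity|].
  apply in_flat_map; exists (prefix op s b k); split.
  - apply IH; intros; apply Hb; lia.
  - cbn [prefix]; apply in_map, in_or_app.
    destruct (Hb (S k)) as [HA|Hs]; [lia|left; exact HA|right; left; symmetry; exact Hs].
Qed.

Lemma prefix_in_gen_with (T : G -> Prop) (s : G) (b : nat -> G) (k : nat) :
  (forall i, 1 <= i <= k -> T (b i) \/ b i = s) ->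
  gen_with op T s (prefix op s b k).
Proof.
  induction k as [|k IH]; intros Hb; [apply gen_base; right; reflexivity|].
  cbn [prefix]; apply gen_op; [apply IH; intros; apply Hb; lia|].
  apply gen_base, Hb; lia.
Qed.

End Products.

Theorem mainTheorem4
  (G : Type) (op : G -> G -> G)
  (op_assoc : forall x y z, op x (op y z) = op (op x y) z)
  (A : list G) (s : G) (n : nat)
  (Hcard : has_card (fun x => gen_with op (gen op (fun a => In a A)) s x
                              /\ ~ gen op (fun a => In a A) x) n) :
  exists N : nat,
    forall b : nat -> G,
      (forall k, 1 <= k <= n -> In (b k) A \/ b k = s) ->
      (forall i j, i <= n -> j <= n -> i <> j -> prefix op s b i <> prefix op s b j) ->
      exists i, i <= n /\
        exists j, 1 <= j <= N /\
          exists a : nat -> G,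
            (forall k, 1 <= k <= j -> In (a k) A) /\
            prefix op s b i = prodn op a j.
Proof.
  destruct (gen_is_product_bounded G op op_assoc A
              (flat_map (extensions G op A s) (seq 0 (S n)))) as [N HN].
  exists N; intros b Hb Hdistinct.
  destruct (has_card_pigeonhole G _ n (prefix op s b) Hcard Hdistinct)
    as [i [Hi Hnot]].
  assert (HbT : forall k, 1 <= k <= i ->
            gen op (fun a => In a A) (b k) \/ b k = s).
  { intros k Hk; destruct (Hb k) as [HA|Hs]; [lia|left; apply gen_base, HA|now right]. }
  exists i; split; [exact Hi|].
  apply HN.
  - apply in_flat_map; exists i; split; [apply in_seq; lia|].
    apply prefix_in_extensions; intros; apply Hb; lia.
  - apply NNPP; intros Hout; apply Hnot; split; [|exact Hout].
    apply prefix_in_gen_with, HbT.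
Qed.
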